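(* Let $Q=\mathrm{diag}(q_1,\dots,q_n)$ with $q_i>0$, $C(u)=\frac12u^TQu$, $P^l\in\mathbb{R}^n$, and suppose there exist $\overline\eta\in\mathcal{R}(D^T)$, $\overline V\in\mathbb{R}^n_{>0}$ and $\overline E_{fd}\in\mathbb{R}^n$ with \[ \Big(Q^{-1}\frac{\mathbf{1}_n\mathbf{1}_n^T}{\mathbf{1}_n^TQ^{-1}\mathbf{1}_n}-I_n\Big)P^l=D\Gamma(\overline V)\boldsymbol{\sin}(\overline\eta),\qquad \mathbf{0}=-E(\overline\eta)\overline V+\overline E_{fd}. \] Then the (unique) minimizer $\overline u$ of $\min_u C(u)$ subject to $\mathbf{1}_n^T(u-P^l)=0$ coincides with the $u$-component $\overline u'$ of a minimizer of \[ \min_{u,\eta}C(u)\quad\text{subject to}\quad \mathbf{0}=u-D\Gamma(\overline V)\boldsymbol{\sin}(\eta)-P^l,\ \ \eta\in\mathcal{R}(D^T). \]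
   Context: Standing setup (power network model). $\mathcal{G}=(\mathcal{V},\mathcal{E})$ is a connected undirected graph with node set $\{1,\dots,n\}$ and $m$ edges; each edge $k=\{i,j\}$ is given an arbitrary orientation, and $D\in\mathbb{R}^{n\times m}$ is the incidence matrix: $d_{ik}=+1$ if $i$ is the positive end of edge $k$, $-1$ if $i$ is the negative end, $0$ otherwise. $\mathbf{1}_n$ is the all-ones vector. For each edge $k=\{i,j\}$ there is a susceptance $B_{ij}=B_{ji}>0$; each node has a self-susceptance $B_{ii}<0$ with $|B_{ii}|>\sum_{j\in\mathcal{N}_i}|B_{ij}|$, and reactances $X_{di}>X'_{di}>0$. For $V\in\mathbb{R}^n$, $\Gamma(V)=\mathrm{diag}(\gamma_1,\dots,\gamma_m)$ with $\gamma_k=V_iV_jB_{ij}$ for edge $k=\{i,j\}$. For $\eta\in\mathbb{R}^m$, $E(\eta)\in\mathbb{R}^{n\times n}$ is the symmetric matrix with $E_{ii}=\frac{1-B_{ii}(X_{di}-X'_{di})}{X_{di}-X'_{di}}$, $E_{ij}=-B_{ij}\cos(\eta_k)$ if $k=\{i,j\}$ is an edge, and $E_{ij}=0$ otherwise. $\boldsymbol{\sin}$ acts componentwise. *)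

(* real numbers with sin/cos. Vectors are functions nat -> R,
   only indices 0..n-1 (nodes) resp. 0..m-1 (edges) are meaningful. *)
From Stdlib Require Import Reals List Arith Bool.
Import ListNotations.
Open Scope R_scope.

Fixpoint rsum (n : nat) (f : nat -> R) : R :=
  match n with
  | O => 0
  | S p => rsum p f + f p
  end.

(* An oriented graph: edge k is the pair (positive end, negative end). *)
Definition edge (edges : list (nat * nat)) (k : nat) : nat * nat :=
  nth k edges (0%nat, 0%nat).

Definition incD (edges : list (nat * nat)) (i k : nat) : R :=
  let (a, b) := edge edges k in
  if Nat.eqb a i then 1 else if Nat.eqb b i then -1 else 0.

Definition adjb (edges : list (nat * nat)) (i j : nat) : bool :=
  existsb (fun e => orb (Nat.eqb (fst e) i && Nat.eqb (snd e) j)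
                    (Nat.eqb (fst e) j && Nat.eqb (snd e) i)) edges.

Inductive reach (edges : list (nat * nat)) : nat -> nat -> Prop :=
| reach_refl : forall i, reach edges i i
| reach_step : forall i j k, reach edges i j -> adjb edges j k = true ->
                             reach edges i k.

(* G = ({0..n-1}, edges) is a connected simple undirected graph,
   each edge carrying an arbitrary orientation. *)
Definition wf_graph (n : nat) (edges : list (nat * nat)) : Prop :=
  (0 < n)%nat /\
  (forall k, (k < length edges)%nat ->
     (fst (edge edges k) < n)%nat /\ (snd (edge edges k) < n)%nat /\
     fst (edge edges k) <> snd (edge edges k)) /\
  (forall k l, (k < length edges)%nat -> (l < length edges)%nat -> k <> l ->
     ~ (edge edges k = edge edges l \/
        edge edges k = (snd (edge edges l), fst (edge edges l)))) /\
  (forall i j, (i < n)%nat -> (j < n)%nat -> reach edges i j).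

Definition network_params (n : nat) (edges : list (nat * nat))
  (B : nat -> nat -> R) (Xd Xd' : nat -> R) : Prop :=
  (forall i j, B i j = B j i) /\
  (forall k, (k < length edges)%nat ->
     B (fst (edge edges k)) (snd (edge edges k)) > 0) /\
  (forall i, (i < n)%nat ->
     B i i < 0 /\
     Rabs (B i i) > rsum n (fun j => if adjb edges i j then Rabs (B i j) else 0)) /\
  (forall i, (i < n)%nat -> Xd i > Xd' i /\ Xd' i > 0).

Definition gammaV (edges : list (nat * nat)) (B : nat -> nat -> R)
  (V : nat -> R) (k : nat) : R :=
  let (a, b) := edge edges k in V a * V b * B a b.

Definition DGsin (edges : list (nat * nat)) (B : nat -> nat -> R)
  (V eta : nat -> R) (i : nat) : R :=
  rsum (length edges) (fun k => incD edges i k * gammaV edges B V k * sin (eta k)).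

Definition Ediag (B : nat -> nat -> R) (Xd Xd' : nat -> R) (i : nat) : R :=
  (1 - B i i * (Xd i - Xd' i)) / (Xd i - Xd' i).

Definition EV (edges : list (nat * nat)) (B : nat -> nat -> R) (Xd Xd' : nat -> R)
  (eta V : nat -> R) (i : nat) : R :=
  Ediag B Xd Xd' i * V i +
  rsum (length edges) (fun k =>
    let (a, b) := edge edges k in
    if Nat.eqb a i then - B a b * cos (eta k) * V b
    else if Nat.eqb b i then - B a b * cos (eta k) * V a
    else 0).

Definition in_range_DT (n : nat) (edges : list (nat * nat)) (eta : nat -> R) : Prop :=
  exists x : nat -> R, forall k, (k < length edges)%nat ->
    eta k = rsum n (fun i => incD edges i k * x i).

Definition cost (n : nat) (q u : nat -> R) : R :=
  / 2 * rsum n (fun i => q i * u i * u i).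

Definition redistr (n : nat) (q P : nat -> R) (i : nat) : R :=
  / q i * rsum n P / rsum n (fun j => / q j) - P i.

Definition feas1 (n : nat) (P u : nat -> R) : Prop :=
  rsum n (fun i => u i - P i) = 0.
Definition minimizer1 (n : nat) (q P u : nat -> R) : Prop :=
  feas1 n P u /\ forall u', feas1 n P u' -> cost n q u <= cost n q u'.

Definition feas2 (n : nat) (edges : list (nat * nat)) (B : nat -> nat -> R)
  (Vb P u eta : nat -> R) : Prop :=
  (forall i, (i < n)%nat -> 0 = u i - DGsin edges B Vb eta i - P i) /\
  in_range_DT n edges eta.
Definition minimizer2 (n : nat) (edges : list (nat * nat)) (B : nat -> nat -> R)
  (q Vb P u eta : nat -> R) : Prop :=
  feas2 n edges B Vb P u eta /\
  forall u' eta', feas2 n edges B Vb P u' eta' -> cost n q u <= cost n q u'.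

(* The constrained quadratic problem is solved by the dispatch
   w_i = (1^T P / 1^T Q^{-1} 1) / q_i, since q_i w_i is constant: on the
   hyperplane 1^T u = 1^T P this gives C(u) = C(w) + 1/2 sum_i q_i (u_i - w_i)^2,
   so w is the unique minimizer, and the first hypothesis says that
   (w, eta_bar) satisfies the power-flow constraint. Since every column of the
   incidence matrix sums to zero, that constraint forces 1^T (u - P) = 0, so the
   second problem has a smaller feasible set in u and the same optimal value. *)
From Stdlib Require Import Reals List Arith.
From Stdlib Require Import Lra Lia.
Open Scope R_scope.

Lemma rsum_ext n f g : (forall i, (i < n)%nat -> f i = g i) -> rsum n f = rsum n g.
Proof.
  induction n as [|n IH]; intros H; simpl; [reflexivity|].
  rewrite IH by (intros; apply H; lia); rewrite H by lia; reflexivity.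
Qed.

Lemma rsum_0 n : rsum n (fun _ => 0) = 0.
Proof. induction n as [|n IH]; simpl; [|rewrite IH]; lra. Qed.

Lemma rsum_add n f g : rsum n (fun i => f i + g i) = rsum n f + rsum n g.
Proof. induction n as [|n IH]; simpl; [|rewrite IH]; lra. Qed.

Lemma rsum_sub n f g : rsum n (fun i => f i - g i) = rsum n f - rsum n g.
Proof. induction n as [|n IH]; simpl; [|rewrite IH]; lra. Qed.

Lemma rsum_mull n c f : rsum n (fun i => c * f i) = c * rsum n f.
Proof. induction n as [|n IH]; simpl; [|rewrite IH]; lra. Qed.

Lemma rsum_mulr n c f : rsum n (fun i => f i * c) = rsum n f * c.
Proof. induction n as [|n IH]; simpl; [|rewrite IH]; lra. Qed.

Lemma rsum_swap n m (f : nat -> nat -> R) :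
  rsum n (fun i => rsum m (f i)) = rsum m (fun k => rsum n (fun i => f i k)).
Proof.
  induction n as [|n IH]; simpl.
  - symmetry; apply rsum_0.
  - rewrite IH, <- rsum_add; reflexivity.
Qed.

Lemma rsum_ge0 n f : (forall i, (i < n)%nat -> 0 <= f i) -> 0 <= rsum n f.
Proof.
  induction n as [|n IH]; intros H; simpl; [lra|].
  assert (0 <= rsum n f) by (apply IH; intros; apply H; lia).
  assert (0 <= f n) by (apply H; lia).
  lra.
Qed.

Lemma rsum_gt0 n f : (0 < n)%nat -> (forall i, (i < n)%nat -> 0 < f i) -> 0 < rsum n f.
Proof.
  destruct n as [|n]; intros Hn H; simpl; [lia|].
  assert (0 <= rsum n f) by (apply rsum_ge0; intros; left; apply H; lia).
  assert (0 < f n) by (apply H; lia).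
  lra.
Qed.

Lemma rsum_ge0_eq0 n f : (forall i, (i < n)%nat -> 0 <= f i) -> rsum n f <= 0 ->
  forall i, (i < n)%nat -> f i = 0.
Proof.
  induction n as [|n IH]; simpl; intros H Hs i Hi; [lia|].
  assert (0 <= rsum n f) by (apply rsum_ge0; intros; apply H; lia).
  assert (0 <= f n) by (apply H; lia).
  destruct (Nat.eq_dec i n) as [->|Hne]; [lra|].
  apply IH; [intros; apply H; lia | lra | lia].
Qed.

Lemma rsum_indicator n a :
  rsum n (fun i => if Nat.eqb a i then 1 else 0) = if Nat.ltb a n then 1 else 0.
Proof.
  induction n as [|n IH]; simpl; [destruct a; reflexivity|].
  rewrite IH.
  destruct (Nat.eqb_spec a n), (Nat.ltb_spec a n), (Nat.ltb_spec a (S n)); lia || lra.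
Qed.

Lemma rsum_incD_column n edges k :
  (fst (edge edges k) < n)%nat -> (snd (edge edges k) < n)%nat ->
  fst (edge edges k) <> snd (edge edges k) ->
  rsum n (fun i => incD edges i k) = 0.
Proof.
  unfold incD; destruct (edge edges k) as [a b]; simpl; intros Ha Hb Hab.
  rewrite (rsum_ext _ _ (fun i => (if Nat.eqb a i then 1 else 0)
                                 - (if Nat.eqb b i then 1 else 0))).
  - rewrite rsum_sub, !rsum_indicator.
    destruct (Nat.ltb_spec a n), (Nat.ltb_spec b n); lia || lra.
  - intros i _; destruct (Nat.eqb_spec a i), (Nat.eqb_spec b i); subst; lia || lra.
Qed.

Lemma rsum_DGsin n edges B V eta :
  wf_graph n edges -> rsum n (DGsin edges B V eta) = 0.
Proof.
  intros [_ [Hends _]]; unfold DGsin; rewrite rsum_swap.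
  rewrite <- (rsum_0 (length edges)); apply rsum_ext; intros k Hk.
  destruct (Hends k Hk) as [Ha [Hb Hab]].
  rewrite (rsum_ext _ _ (fun i => incD edges i k * (gammaV edges B V k * sin (eta k))))
    by (intros; ring).
  rewrite rsum_mulr, rsum_incD_column by assumption; ring.
Qed.

Lemma feas2_feas1 n edges B V P u eta :
  wf_graph n edges -> feas2 n edges B V P u eta -> feas1 n P u.
Proof.
  intros Hg [Hflow _]; unfold feas1.
  rewrite <- (rsum_DGsin n edges B V eta Hg); apply rsum_ext.
  intros i Hi; specialize (Hflow i Hi); lra.
Qed.

Section EconomicDispatch.

Variables (n : nat) (q P : nat -> R).
Hypothesis n_gt0 : (0 < n)%nat.
Hypothesis q_gt0 : forall i, (i < n)%nat -> q i > 0.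

Definition opt_dispatch (i : nat) : R :=
  / q i * rsum n P / rsum n (fun j => / q j).

Lemma redistr_opt_dispatch i : redistr n q P i = opt_dispatch i - P i.
Proof. reflexivity. Qed.

Let weight_sum_gt0 : 0 < rsum n (fun j => / q j).
Proof. apply rsum_gt0; [exact n_gt0|]; intros; apply Rinv_0_lt_compat, q_gt0; lia. Qed.

Lemma opt_dispatch_marginal i :
  (i < n)%nat -> q i * opt_dispatch i = rsum n P / rsum n (fun j => / q j).
Proof.
  intros Hi; unfold opt_dispatch; specialize (q_gt0 i Hi); field; lra.
Qed.

Lemma feas1_opt_dispatch : feas1 n P opt_dispatch.
Proof.
  unfold feas1, opt_dispatch; rewrite rsum_sub.
  rewrite (rsum_ext _ _ (fun i => / q i * (rsum n P / rsum n (fun j => / q j))))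
    by (intros; unfold Rdiv; ring).
  rewrite rsum_mulr; field; lra.
Qed.

Lemma cost_feas1_split u : feas1 n P u ->
  cost n q u = cost n q opt_dispatch
    + / 2 * rsum n (fun i => q i * (u i - opt_dispatch i) * (u i - opt_dispatch i)).
Proof.
  intros Hu; unfold cost.
  set (c := rsum n P / rsum n (fun j => / q j)).
  (* the cross term is c times the difference of two vanishing constraint sums *)
  rewrite (rsum_ext _ _ (fun i =>
      (q i * opt_dispatch i * opt_dispatch i
       + q i * (u i - opt_dispatch i) * (u i - opt_dispatch i))
      + 2 * c * ((u i - P i) - (opt_dispatch i - P i)))).
  - rewrite !rsum_add, rsum_mull, rsum_sub.
    unfold feas1 in Hu; rewrite Hu, feas1_opt_dispatch; ring.
  - intros i Hi; unfold c; rewrite <- (opt_dispatch_marginal i Hi); ring.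
Qed.

Lemma feas1_cost_le_opt_dispatch u : feas1 n P u ->
  cost n q u <= cost n q opt_dispatch -> forall i, (i < n)%nat -> u i = opt_dispatch i.
Proof.
  intros Hu Hle i Hi.
  rewrite (cost_feas1_split u Hu) in Hle.
  assert (Hsq : forall j, (j < n)%nat ->
            0 <= q j * (u j - opt_dispatch j) * (u j - opt_dispatch j)).
  { intros j Hj; rewrite Rmult_assoc.
    apply Rmult_le_pos; [left; apply q_gt0, Hj | apply Rle_0_sqr]. }
  assert (Hdi : q i * (u i - opt_dispatch i) * (u i - opt_dispatch i) = 0).
  { apply (rsum_ge0_eq0 n _ Hsq); [lra | exact Hi]. }
  specialize (q_gt0 i Hi).
  destruct (Rmult_integral _ _ Hdi) as [Hqd | Hd]; [|lra].
  destruct (Rmult_integral _ _ Hqd); lra.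
Qed.

End EconomicDispatch.

Theorem lemma4 (n : nat) (edges : list (nat * nat))
  (B : nat -> nat -> R) (Xd Xd' : nat -> R) (q P : nat -> R)
  (Hg : wf_graph n edges) (Hp : network_params n edges B Xd Xd')
  (Hq : forall i, (i < n)%nat -> q i > 0)
  (etab Vb Efd : nat -> R)
  (Heta : in_range_DT n edges etab)
  (HV : forall i, (i < n)%nat -> Vb i > 0)
  (H1 : forall i, (i < n)%nat -> redistr n q P i = DGsin edges B Vb etab i)
  (H2 : forall i, (i < n)%nat -> 0 = - EV edges B Xd Xd' etab Vb i + Efd i) :
  forall ub : nat -> R, minimizer1 n q P ub ->
    (exists eta, minimizer2 n edges B q Vb P ub eta) /\
    (forall u' eta', minimizer2 n edges B q Vb P u' eta' ->
       forall i, (i < n)%nat -> u' i = ub i).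
Proof.
  intros ub [Hfeas_ub Hmin_ub].
  pose proof (proj1 Hg) as Hn.
  pose proof (Hmin_ub _ (feas1_opt_dispatch n q P Hn Hq)) as Hcost_ub.
  assert (Hub : forall i, (i < n)%nat -> ub i = opt_dispatch n q P i)
    by exact (feas1_cost_le_opt_dispatch n q P Hn Hq ub Hfeas_ub Hcost_ub).
  assert (Hfeas2 : feas2 n edges B Vb P ub etab).
  { split; [|exact Heta]; intros i Hi.
    rewrite Hub, <- H1, redistr_opt_dispatch by exact Hi; ring. }
  split.
  - exists etab; split; [exact Hfeas2|].
    intros u' eta' H'; apply Hmin_ub, (feas2_feas1 n edges B Vb P u' eta' Hg H').
  - intros u' eta' [H' Hmin'] i Hi; rewrite Hub by exact Hi.
    apply (feas1_cost_le_opt_dispatch n q P Hn Hq u'); [| |exact Hi].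
    + exact (feas2_feas1 n edges B Vb P u' eta' Hg H').
    + exact (Rle_trans _ _ _ (Hmin' ub etab Hfeas2) Hcost_ub).
Qed.
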